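(* Let $n\ge2$, let $D=\{(y,z)\in\mathbb R^2_{>0}:\tfrac{z^2(n+1)}{z^2+n}\le y<1\}$, and let $(x,y,z)$ be the solution on its maximal interval $[0,T_{\max})$ of \[\dot x=nx^2+z^2,\quad \dot y=(n+1)z^2,\quad \dot z=\tfrac{n+1}{n}z\big((n-1)x+y\big),\] with initial condition $(1,y_0,z_0)$ where $(y_0,z_0)\in D$. Then $y,z<x$ on $[0,T_{\max})$ and there exists a constant $C>0$ such that \[\frac{1}{C(T_{\max}-t)}<x(t)<\frac{C}{T_{\max}-t}\qquad\text{for all }t\in[0,T_{\max}).\] *)

From Stdlib Require Import Reals.
From Coquelicot Require Import Coquelicot.
Open Scope R_scope.

Definition fx (n : nat) (x y z : R) : R := INR n * x ^ 2 + z ^ 2.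
Definition fy (n : nat) (x y z : R) : R := (INR n + 1) * z ^ 2.
Definition fz (n : nat) (x y z : R) : R :=
  (INR n + 1) / INR n * z * ((INR n - 1) * x + y).

Definition inD (n : nat) (y0 z0 : R) : Prop :=
  0 < y0 /\ 0 < z0 /\ z0 ^ 2 * (INR n + 1) / (z0 ^ 2 + INR n) <= y0 /\ y0 < 1.

Definition is_sol (n : nat) (T : Rbar) (x y z : R -> R) : Prop :=
  (forall t, 0 < t -> Rbar_lt t T ->
     is_derive x t (fx n (x t) (y t) (z t)) /\
     is_derive y t (fy n (x t) (y t) (z t)) /\
     is_derive z t (fz n (x t) (y t) (z t))) /\
  filterlim x (at_right 0) (locally (x 0)) /\
  filterlim y (at_right 0) (locally (y 0)) /\
  filterlim z (at_right 0) (locally (z 0)).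

Definition is_maximal_sol (n : nat) (T : Rbar) (x y z : R -> R) : Prop :=
  Rbar_lt 0 T /\ is_sol n T x y z /\
  forall (T' : Rbar) (x' y' z' : R -> R),
    is_sol n T' x' y' z' ->
    (forall t, 0 <= t -> Rbar_lt t T -> x' t = x t /\ y' t = y t /\ z' t = z t) ->
    Rbar_le T' T.

(* The cone [|z| < x] is invariant: inside it [(x - y)' = n (x^2 - z^2) >= 0], so at a
   first exit time, where [x = |z|], the one of [x - z], [x + z] that vanishes would
   have derivative [(n + 1) / n * x * (x - y) > 0], impossible for a positive function
   reaching [0]. In the cone [g = 1 / x] has [g' = - n - z^2 / x^2] in [[- (n + 1), - n]],
   so [g] vanishes in finite time, whence [Tmax < oo] and [g t >= n (Tmax - t)].
   Conversely [g] gets arbitrarily small before [Tmax]: otherwise [x], [y], [z] stay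
   bounded and Picard-Lindelof continues the solution past [Tmax], against maximality.
   Hence [g t <= (n + 1) (Tmax - t)], and [x = 1 / g] gives the bounds. *)

From Stdlib Require Import Reals Lra Lia Classical.
From Coquelicot Require Import Coquelicot.
Open Scope R_scope.

(** * One-sided continuity and mean value inequalities *)

Definition right_continuous (f : R -> R) (s : R) : Prop :=
  filterlim f (at_right s) (locally (f s)).

Lemma continuity_pt_ball f s eps : continuity_pt f s -> 0 < eps ->
  exists d, 0 < d /\ forall r, Rabs (r - s) < d -> Rabs (f r - f s) < eps.
Proof.
  intros Hf Heps. destruct (Hf eps Heps) as [d [Hd Hball]].
  exists d; split; [exact Hd|]. intros r Hr.
  destruct (Req_dec r s) as [->|Hne].
  - rewrite Rminus_eq_0, Rabs_R0; exact Heps.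
  - apply Hball. split; [split; [exact I|congruence]|exact Hr].
Qed.

Lemma right_continuous_ball f s eps : right_continuous f s -> 0 < eps ->
  exists d, 0 < d /\ forall r, s < r < s + d -> Rabs (f r - f s) < eps.
Proof.
  intros Hf Heps.
  destruct (Hf (fun u => Rabs (u - f s) < eps)) as [d Hd].
  { exists (mkposreal eps Heps). intros u Hu. exact Hu. }
  exists d; split; [apply cond_pos|]. intros r Hr. apply Hd; [|lra].
  cbn; unfold AbsRing_ball, abs, minus, plus, opp; cbn.
  rewrite Rabs_pos_eq; lra.
Qed.

Lemma is_derive_continuity_pt f t l : is_derive f t l -> continuity_pt f t.
Proof.
  intros Hf. apply continuity_pt_filterlim, (ex_derive_continuous (V := R_NormedModule)).
  exists l; exact Hf.
Qed.

Lemma right_continuous_of_continuity_pt f s : continuity_pt f s -> right_continuous f s.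
Proof.
  intros Hf. apply continuity_pt_filterlim in Hf.
  intros P HP. destruct (Hf P HP) as [d Hd]. exists d. intros r Hr _. exact (Hd r Hr).
Qed.

Lemma right_continuous_comp g f s : right_continuous f s -> continuity_pt g (f s) ->
  right_continuous (fun r => g (f r)) s.
Proof.
  intros Hf Hg. exact (filterlim_comp _ _ _ f g _ _ _ Hf (proj1 (continuity_pt_filterlim _ _) Hg)).
Qed.

Lemma right_continuous_minus f g s : right_continuous f s -> right_continuous g s ->
  right_continuous (fun r => f r - g r) s.
Proof.
  intros Hf Hg.
  exact (filterlim_comp_2 (V := R_NormedModule) f (fun r => opp (g r)) plus Hf
    (filterlim_comp _ _ _ g opp _ _ _ Hg (filterlim_opp (g s)))
    (filterlim_plus (f s) (opp (g s)))).
Qed.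

Lemma right_continuous_ge0 h s t : s < t -> right_continuous h s ->
  (forall r, s < r < t -> 0 <= h r) -> 0 <= h s.
Proof.
  intros Hst Hh Hpos. apply Rnot_lt_le. intros Hneg.
  destruct (right_continuous_ball h s (- h s) Hh) as [d [Hd Hball]]; [lra|].
  set (r := s + Rmin d (t - s) / 2).
  assert (Hmin : 0 < Rmin d (t - s) <= d /\ Rmin d (t - s) <= t - s).
  { split; [split; [apply Rmin_pos; lra|apply Rmin_l]|apply Rmin_r]. }
  assert (Hr := Hball r ltac:(unfold r; lra)).
  assert (Hr' := Hpos r ltac:(unfold r; lra)).
  apply Rabs_def2 in Hr. lra.
Qed.

Lemma mvt_lower f df s t lo : s < t -> right_continuous f s ->
  (forall r, s < r <= t -> is_derive f r (df r) /\ lo <= df r) ->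
  lo * (t - s) <= f t - f s.
Proof.
  intros Hst Hf Hd.
  set (k := fun r => (f t - lo * t) - (f r - lo * r)).
  enough (0 <= k s) by (unfold k in *; lra).
  apply (right_continuous_ge0 k s t Hst).
  - apply right_continuous_minus; [apply filterlim_const|].
    apply right_continuous_minus; [exact Hf|].
    apply right_continuous_of_continuity_pt.
    apply continuity_pt_mult; [apply continuity_pt_const; now intros ? ?|apply continuity_pt_id].
  - intros r Hr. unfold k.
    destruct (MVT_gen f r t df) as [c [Hc Heq]].
    + rewrite Rmin_left, Rmax_right by lra. intros u Hu. apply Hd. lra.
    + rewrite Rmin_left, Rmax_right by lra. intros u Hu.
      apply (is_derive_continuity_pt f u (df u)), Hd. lra.
    + rewrite Rmin_left, Rmax_right in Hc by lra.
      assert (lo <= df c) by (apply Hd; lra). nra.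
Qed.

Lemma mvt_upper f df s t hi : s < t -> right_continuous f s ->
  (forall r, s < r <= t -> is_derive f r (df r) /\ df r <= hi) ->
  f t - f s <= hi * (t - s).
Proof.
  intros Hst Hf Hd.
  enough (- hi * (t - s) <= - f t - - f s) by lra.
  apply (mvt_lower (fun r => - f r) (fun r => - df r)); [exact Hst| |].
  - apply (right_continuous_comp Ropp f s Hf), continuity_pt_opp, continuity_pt_id.
  - intros r Hr. destruct (Hd r Hr) as [Hder Hle]. split; [|lra].
    apply (is_derive_opp (V := R_NormedModule) f r (df r) Hder).
Qed.

Lemma is_derive_0_const f s t : s < t -> right_continuous f s ->
  (forall r, s < r <= t -> is_derive f r 0) -> f t = f s.
Proof.
  intros Hst Hf Hd.
  assert (Hlo := mvt_lower f (fun _ => 0) s t 0 Hst Hf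
    ltac:(intros r Hr; split; [apply Hd, Hr|lra])).
  assert (Hhi := mvt_upper f (fun _ => 0) s t 0 Hst Hf
    ltac:(intros r Hr; split; [apply Hd, Hr|lra])).
  lra.
Qed.

Lemma is_derive_nonpos_at_first_zero f s u df : s < u ->
  (forall r, s < r < u -> 0 < f r) -> f u = 0 -> is_derive f u df -> df <= 0.
Proof.
  intros Hsu Hpos Hfu Hf. apply Rnot_lt_le. intros Hdf. apply is_derive_Reals in Hf.
  destruct (Hf (df / 2) ltac:(lra)) as [eta Heta]. assert (Heta0 := cond_pos eta).
  set (r := Rmax ((s + u) / 2) (u - eta / 2)).
  assert ((s + u) / 2 <= r /\ u - eta / 2 <= r /\ r < u)
    by (split; [apply Rmax_l|split; [apply Rmax_r|apply Rmax_lub_lt; lra]]).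
  assert (Hq := Heta (r - u) ltac:(lra) ltac:(rewrite Rabs_left; lra)).
  replace (u + (r - u)) with r in Hq by ring. rewrite Hfu in Hq. apply Rabs_def2 in Hq.
  assert (Hfr := Hpos r ltac:(lra)).
  assert (/ (r - u) < 0) by (apply Rinv_lt_0_compat; lra).
  assert (f r * / (r - u) < 0) by (rewrite <- (Rmult_0_r (f r)); apply Rmult_lt_compat_l; lra).
  unfold Rdiv in Hq. rewrite Rminus_0_r in Hq. lra.
Qed.

Lemma continuity_pt_pos_near h u : continuity_pt h u -> 0 < h u ->
  exists e, 0 < e /\ forall r, Rabs (r - u) < e -> 0 < h r.
Proof.
  intros Hh Hu. destruct (continuity_pt_ball h u (h u) Hh Hu) as [e [He Hball]].
  exists e; split; [exact He|]. intros r Hr.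
  assert (Hr' := Hball r Hr). apply Rabs_def2 in Hr'. lra.
Qed.

Lemma first_zero h s t : s < t -> 0 < h s -> h t <= 0 -> right_continuous h s ->
  (forall r, s < r <= t -> continuity_pt h r) ->
  exists u, s < u <= t /\ h u = 0 /\ forall r, s <= r < u -> 0 < h r.
Proof.
  intros Hst Hs Ht Hright Hcont.
  set (E := fun u => s <= u <= t /\ forall r, s <= r <= u -> 0 < h r).
  destruct (completeness E) as [u [Hub Hlub]].
  { exists t. intros v Hv; apply Hv. }
  { exists s. split; [lra|]. intros r Hr. replace r with s by lra. exact Hs. }
  assert (Hbelow : forall r, s <= r < u -> 0 < h r).
  { intros r Hr. apply NNPP. intros Hnot. enough (u <= r) by lra.
    apply Hlub. intros v [Hv Hpos]. apply Rnot_lt_le. intros Hrv. apply Hnot, Hpos. lra. }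
  assert (Hut : u <= t) by (apply Hlub; intros v Hv; apply Hv).
  assert (Hsu : s < u).
  { destruct (right_continuous_ball h s (h s) Hright Hs) as [d [Hd Hnear]].
    set (v := s + Rmin d (t - s) / 2).
    assert (0 < Rmin d (t - s) <= d /\ Rmin d (t - s) <= t - s)
      by (split; [split; [apply Rmin_pos; lra|apply Rmin_l]|apply Rmin_r]).
    enough (E v) by (assert (v <= u) by (apply Hub; assumption); unfold v in *; lra).
    split; [unfold v; lra|]. intros r Hr.
    destruct (Req_dec r s) as [->|Hne]; [exact Hs|].
    assert (Hr' := Hnear r ltac:(unfold v in Hr; lra)). apply Rabs_def2 in Hr'. lra. }
  exists u. split; [lra|]. split; [|exact Hbelow].
  apply Rle_antisym.
  - apply Rnot_lt_le. intros Hpos.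
    destruct (continuity_pt_pos_near h u (Hcont u ltac:(lra)) Hpos) as [e [He Hnear]].
    assert (Hu : u < t) by (destruct (Req_dec u t) as [->|]; lra).
    set (v := Rmin t (u + e / 2)).
    assert (u < v /\ v <= t /\ v <= u + e / 2)
      by (split; [apply Rmin_glb_lt; lra|split; [apply Rmin_l|apply Rmin_r]]).
    enough (E v) by (assert (v <= u) by (apply Hub; assumption); lra).
    split; [lra|]. intros r Hr.
    destruct (Rlt_or_le r u); [apply Hbelow; lra|apply Hnear; rewrite Rabs_pos_eq; lra].
  - apply Rnot_lt_le. intros Hneg.
    destruct (continuity_pt_pos_near (fun r => - h r) u
      (continuity_pt_opp h u (Hcont u ltac:(lra))) ltac:(lra)) as [e [He Hnear]].
    set (r := Rmax s (u - e / 2)).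
    assert (s <= r /\ u - e / 2 <= r /\ r < u)
      by (split; [apply Rmax_l|split; [apply Rmax_r|apply Rmax_lub_lt; lra]]).
    assert (Hr := Hnear r ltac:(rewrite Rabs_left; lra)).
    assert (Hr' := Hbelow r ltac:(lra)). lra.
Qed.

(** * Picard-Lindelof and uniqueness for systems of three equations *)

Definition Rclamp (lo hi t : R) : R := Rmax lo (Rmin hi t).

Lemma Rclamp_in lo hi t : lo <= hi -> lo <= Rclamp lo hi t <= hi.
Proof. intros H. unfold Rclamp, Rmax, Rmin. repeat destruct Rle_dec; lra. Qed.

Lemma Rclamp_id lo hi t : lo <= t <= hi -> Rclamp lo hi t = t.
Proof. intros H. unfold Rclamp, Rmax, Rmin. repeat destruct Rle_dec; lra. Qed.

Lemma Rclamp_lipschitz lo hi t t' : lo <= hi ->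
  Rabs (Rclamp lo hi t - Rclamp lo hi t') <= Rabs (t - t').
Proof.
  intros H. unfold Rclamp, Rmax, Rmin.
  repeat destruct Rle_dec; unfold Rabs; repeat destruct Rcase_abs; lra.
Qed.

(* A system [u_i' = F i u_0 u_1 u_2] is given by [F : nat -> R -> R -> R -> R] and its
   solutions by families [nat -> R -> R]; only the components [0], [1], [2] enter [F]. *)
Definition is_lipschitz (F : nat -> R -> R -> R -> R) (L : R) : Prop :=
  forall i u v w u' v' w', Rabs (F i u v w - F i u' v' w')
    <= L * (Rabs (u - u') + Rabs (v - v') + Rabs (w - w')).

Definition is_solution (F : nat -> R -> R -> R -> R) (s t : R) (X : nat -> R -> R) : Prop :=
  forall i r, s < r < t -> is_derive (X i) r (F i (X 0%nat r) (X 1%nat r) (X 2%nat r)).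

Lemma is_lipschitz_nonneg F L : is_lipschitz F L -> 0 <= L.
Proof.
  intros HL. assert (H := HL 0%nat 1 0 0 0 0 0).
  rewrite Rminus_0_r, Rminus_eq_0, Rabs_R0, Rabs_R1 in H.
  generalize (Rabs_pos (F 0%nat 1 0 0 - F 0%nat 0 0 0)). lra.
Qed.

Lemma half_pow_small c eps : 0 < eps -> exists k, c * (/ 2) ^ k < eps.
Proof.
  intros Heps.
  destruct (pow_lt_1_zero (/ 2) ltac:(rewrite Rabs_pos_eq; lra) (eps / (Rabs c + 1)))
    as [k Hk]; [apply Rdiv_lt_0_compat; generalize (Rabs_pos c); lra|].
  exists k. specialize (Hk k (le_n k)).
  assert (Hpos : 0 < (/ 2) ^ k) by (apply pow_lt; lra).
  rewrite Rabs_pos_eq in Hk by lra.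
  apply Rmult_lt_compat_r with (r := Rabs c + 1) in Hk; [|generalize (Rabs_pos c); lra].
  unfold Rdiv in Hk. rewrite Rmult_assoc, Rinv_l, Rmult_1_r in Hk
    by (generalize (Rabs_pos c); lra).
  generalize (Rle_abs c). nra.
Qed.

Section PicardLindelof.

Variable F : nat -> R -> R -> R -> R.
Variables K L a b : R.
Variable p : nat -> R.
Hypothesis Hab : a < b.
Hypothesis HF_bound : forall i u v w, Rabs (F i u v w) <= K.
Hypothesis HF_lipschitz : is_lipschitz F L.
Hypothesis Hshort : 3 * L * (b - a) <= / 2.

Lemma field_bound_nonneg : 0 <= K.
Proof. apply Rle_trans with (2 := HF_bound 0%nat 0 0 0), Rabs_pos. Qed.

Definition family_continuous (phi : nat -> R -> R) : Prop :=
  forall j t, continuity_pt (phi j) t.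

Definition field_along (phi : nat -> R -> R) (i : nat) (s : R) : R :=
  F i (phi 0%nat s) (phi 1%nat s) (phi 2%nat s).

(* Clamping [t] to [[a, b]] lets the Picard operator act on functions defined on all
   of [R]. *)
Definition picard_step (phi : nat -> R -> R) (i : nat) (t : R) : R :=
  p i + RInt (field_along phi i) a (Rclamp a b t).

Fixpoint picard_iter (k : nat) : nat -> R -> R :=
  match k with
  | O => fun i _ => p i
  | S k => picard_step (picard_iter k)
  end.

Definition picard_limit (i : nat) (t : R) : R :=
  real (Lim_seq (fun k => picard_iter k i t)).

Lemma field_along_continuous phi : family_continuous phi ->
  forall i s, continuous (field_along phi i) s.
Proof.
  intros Hphi i s. apply continuity_pt_filterlim. intros eps Heps.
  assert (HL := is_lipschitz_nonneg F L HF_lipschitz).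
  set (e := eps / (3 * (L + 1))).
  assert (He : 0 < e) by (unfold e; apply Rdiv_lt_0_compat; lra).
  destruct (continuity_pt_ball _ _ e (Hphi 0%nat s) He) as [d0 [Hd0 H0]].
  destruct (continuity_pt_ball _ _ e (Hphi 1%nat s) He) as [d1 [Hd1 H1]].
  destruct (continuity_pt_ball _ _ e (Hphi 2%nat s) He) as [d2 [Hd2 H2]].
  exists (Rmin d0 (Rmin d1 d2)). split; [repeat apply Rmin_pos; assumption|].
  intros r [_ Hr]. cbn in Hr |- *; unfold R_dist in Hr |- *.
  assert (Hr0 := H0 r ltac:(apply Rlt_le_trans with (1 := Hr), Rmin_l)).
  assert (Hr1 := H1 r ltac:(apply Rlt_le_trans with (1 := Hr);
    eapply Rle_trans; [apply Rmin_r|apply Rmin_l])).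
  assert (Hr2 := H2 r ltac:(apply Rlt_le_trans with (1 := Hr);
    eapply Rle_trans; [apply Rmin_r|apply Rmin_r])).
  assert (He3 : e * (3 * (L + 1)) = eps) by (unfold e; field; lra).
  eapply Rle_lt_trans; [apply HF_lipschitz|]. nra.
Qed.

Lemma field_along_ex_RInt phi : family_continuous phi ->
  forall i u v, ex_RInt (field_along phi i) u v.
Proof.
  intros Hphi i u v. apply (ex_RInt_continuous (V := R_CompleteNormedModule)).
  intros s _. apply field_along_continuous, Hphi.
Qed.

Lemma is_derive_RInt_field_along phi : family_continuous phi ->
  forall i t, is_derive (RInt (field_along phi i) a) t (field_along phi i t).
Proof.
  intros Hphi i t.
  apply (is_derive_RInt (V := R_NormedModule) _ (RInt (field_along phi i) a) a).
  - exists (mkposreal 1 Rlt_0_1). intros u _.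
    apply (RInt_correct (V := R_CompleteNormedModule)), field_along_ex_RInt, Hphi.
  - apply field_along_continuous, Hphi.
Qed.

Lemma picard_step_continuous phi : family_continuous phi ->
  family_continuous (picard_step phi).
Proof.
  intros Hphi i t. unfold picard_step.
  apply continuity_pt_plus; [apply continuity_pt_const; now intros ? ?|].
  intros eps Heps.
  destruct (continuity_pt_ball _ (Rclamp a b t) eps
    (is_derive_continuity_pt _ _ _ (is_derive_RInt_field_along phi Hphi i _)) Heps)
    as [d [Hd Hball]].
  exists d; split; [exact Hd|]. intros r [_ Hr]. apply Hball.
  eapply Rle_lt_trans; [apply Rclamp_lipschitz; lra|exact Hr].
Qed.

Lemma picard_step_contraction phi psi D :
  family_continuous phi -> family_continuous psi ->
  (forall j t, Rabs (phi j t - psi j t) <= D) ->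
  forall i t, Rabs (picard_step phi i t - picard_step psi i t) <= D / 2.
Proof.
  intros Hphi Hpsi HD i t. unfold picard_step.
  assert (HL := is_lipschitz_nonneg F L HF_lipschitz).
  assert (HD0 : 0 <= D) by (eapply Rle_trans; [apply Rabs_pos|apply (HD 0%nat 0)]).
  set (c := Rclamp a b t).
  assert (Hc : a <= c <= b) by (apply Rclamp_in; lra).
  replace (p i + RInt (field_along phi i) a c - (p i + RInt (field_along psi i) a c))
    with (RInt (fun s => field_along phi i s - field_along psi i s) a c).
  2:{ rewrite (RInt_minus (V := R_CompleteNormedModule)); [|apply field_along_ex_RInt..];
      [cbn; unfold minus, plus, opp; cbn; ring|assumption|assumption]. }
  apply Rle_trans with ((c - a) * (L * (3 * D))).
  - apply (abs_RInt_le_const _ _ _ (L * (3 * D))); [lra| |].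
    + apply (ex_RInt_minus (V := R_NormedModule)); apply field_along_ex_RInt; assumption.
    + intros s _. unfold field_along. eapply Rle_trans; [apply HF_lipschitz|].
      apply Rmult_le_compat_l; [exact HL|].
      generalize (HD 0%nat s) (HD 1%nat s) (HD 2%nat s); lra.
  - apply Rle_trans with ((3 * L * (b - a)) * D); [|nra].
    apply Rle_trans with ((b - a) * (L * (3 * D))); [|right; ring].
    apply Rmult_le_compat_r; [nra|lra].
Qed.

Lemma picard_iter_continuous k : family_continuous (picard_iter k).
Proof.
  induction k as [|k IH]; cbn.
  - intros j t. apply continuity_pt_const. now intros ? ?.
  - apply picard_step_continuous, IH.
Qed.

Lemma picard_iter_step k i t :
  Rabs (picard_iter (S k) i t - picard_iter k i t) <= K * (b - a) * (/ 2) ^ k.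
Proof.
  revert i t. induction k as [|k IH]; intros i t.
  - cbn. unfold picard_step. rewrite Rmult_1_r, Rplus_minus_l.
    assert (Hc : a <= Rclamp a b t <= b) by (apply Rclamp_in; lra).
    apply Rle_trans with ((Rclamp a b t - a) * K); [|generalize field_bound_nonneg; nra].
    apply abs_RInt_le_const; [lra| |intros s _; apply HF_bound].
    apply field_along_ex_RInt, (picard_iter_continuous 0).
  - change (Rabs (picard_step (picard_iter (S k)) i t - picard_step (picard_iter k) i t)
      <= K * (b - a) * (/ 2) ^ S k).
    replace (K * (b - a) * (/ 2) ^ S k) with (K * (b - a) * (/ 2) ^ k / 2) by (cbn; field).
    apply picard_step_contraction; [apply picard_iter_continuous..|exact IH].
Qed.

Lemma picard_iter_cauchy k j i t :
  Rabs (picard_iter (k + j) i t - picard_iter k i t)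
    <= 2 * K * (b - a) * ((/ 2) ^ k - (/ 2) ^ (k + j)).
Proof.
  induction j as [|j IH].
  - rewrite Nat.add_0_r, Rminus_eq_0, Rabs_R0. lra.
  - rewrite Nat.add_succ_r.
    assert (Hstep := picard_iter_step (k + j) i t).
    replace (picard_iter (S (k + j)) i t - picard_iter k i t) with
      ((picard_iter (S (k + j)) i t - picard_iter (k + j) i t)
       + (picard_iter (k + j) i t - picard_iter k i t)) by ring.
    eapply Rle_trans; [apply Rabs_triang|]. cbn [pow]. lra.
Qed.

Lemma picard_iter_uniform_cauchy k m i t : (k <= m)%nat ->
  Rabs (picard_iter m i t - picard_iter k i t) <= 2 * K * (b - a) * (/ 2) ^ k.
Proof.
  intros Hkm. replace m with (k + (m - k))%nat by lia.
  eapply Rle_trans; [apply picard_iter_cauchy|].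
  assert (0 <= K * (b - a)) by (generalize field_bound_nonneg; nra).
  assert (0 < (/ 2) ^ (k + (m - k))) by (apply pow_lt; lra).
  nra.
Qed.

Lemma picard_iter_converges i t :
  is_lim_seq (fun k => picard_iter k i t) (picard_limit i t).
Proof.
  apply Lim_seq_correct', ex_lim_seq_cauchy_corr. intros eps.
  destruct (half_pow_small (2 * K * (b - a)) (eps / 2)) as [N HN];
    [generalize (cond_pos eps); lra|].
  exists N. intros m m' Hm Hm'.
  assert (H1 := picard_iter_uniform_cauchy N m i t Hm).
  assert (H2 := picard_iter_uniform_cauchy N m' i t Hm').
  replace (picard_iter m i t - picard_iter m' i t) with
    ((picard_iter m i t - picard_iter N i t) - (picard_iter m' i t - picard_iter N i t)) by ring.
  eapply Rle_lt_trans; [apply Rabs_triang|]. rewrite Rabs_Ropp. lra.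
Qed.

Lemma picard_limit_approx k i t :
  Rabs (picard_limit i t - picard_iter k i t) <= 2 * K * (b - a) * (/ 2) ^ k.
Proof.
  set (B := 2 * K * (b - a) * (/ 2) ^ k).
  assert (Hev : forall m, (k <= m)%nat ->
    picard_iter k i t - B <= picard_iter m i t <= picard_iter k i t + B).
  { intros m Hm. apply Rabs_le_between'. apply picard_iter_uniform_cauchy, Hm. }
  assert (Hup : Rbar_le (picard_limit i t) (picard_iter k i t + B)).
  { apply (is_lim_seq_le_loc (fun m => picard_iter m i t) (fun _ => picard_iter k i t + B));
      [exists k; intros m Hm; apply Hev, Hm|apply picard_iter_converges|apply is_lim_seq_const]. }
  assert (Hlow : Rbar_le (picard_iter k i t - B) (picard_limit i t)).
  { apply (is_lim_seq_le_loc (fun _ => picard_iter k i t - B) (fun m => picard_iter m i t));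
      [exists k; intros m Hm; apply Hev, Hm|apply is_lim_seq_const|apply picard_iter_converges]. }
  cbn in Hup, Hlow. apply Rabs_le. lra.
Qed.

Lemma picard_limit_continuous : family_continuous picard_limit.
Proof.
  intros j t eps Heps.
  destruct (half_pow_small (2 * K * (b - a)) (eps / 3)) as [N HN]; [lra|].
  destruct (continuity_pt_ball _ _ (eps / 3) (picard_iter_continuous N j t))
    as [d [Hd Hball]]; [lra|].
  exists d; split; [exact Hd|]. intros r [_ Hr]. cbn in Hr |- *; unfold R_dist in Hr |- *.
  assert (H1 := picard_limit_approx N j r). assert (H2 := picard_limit_approx N j t).
  assert (H3 := Hball r Hr).
  replace (picard_limit j r - picard_limit j t) with
    ((picard_limit j r - picard_iter N j r) + (picard_iter N j r - picard_iter N j t)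
     - (picard_limit j t - picard_iter N j t)) by ring.
  eapply Rle_lt_trans; [apply Rabs_triang|]. rewrite Rabs_Ropp.
  eapply Rle_lt_trans; [apply Rplus_le_compat_r, Rabs_triang|]. lra.
Qed.

Lemma picard_limit_fixpoint i t : picard_step picard_limit i t = picard_limit i t.
Proof.
  apply Rminus_diag_uniq, Rabs_eq_0, Rle_antisym; [|apply Rabs_pos].
  apply Rnot_lt_le. intros Hpos.
  destruct (half_pow_small (2 * K * (b - a)) _ Hpos) as [N HN].
  assert (H1 : Rabs (picard_step picard_limit i t - picard_step (picard_iter N) i t)
      <= 2 * K * (b - a) * (/ 2) ^ N / 2).
  { apply picard_step_contraction;
      [apply picard_limit_continuous|apply picard_iter_continuous|apply picard_limit_approx]. }
  assert (H2 := picard_limit_approx (S N) i t).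
  change (picard_iter (S N) i t) with (picard_step (picard_iter N) i t) in H2.
  cbn [pow] in H2.
  assert (H3 := Rabs_triang (picard_step picard_limit i t - picard_step (picard_iter N) i t)
    (- (picard_limit i t - picard_step (picard_iter N) i t))).
  rewrite Rabs_Ropp in H3.
  replace (_ + - _) with (picard_step picard_limit i t - picard_limit i t) in H3 by ring.
  lra.
Qed.

Lemma picard_limit_init i : picard_limit i a = p i.
Proof.
  rewrite <- picard_limit_fixpoint. unfold picard_step.
  rewrite Rclamp_id, RInt_point by lra. cbn. ring.
Qed.

Lemma picard_limit_near_init i t : Rabs (picard_limit i t - p i) <= K * (b - a).
Proof.
  rewrite <- picard_limit_fixpoint. unfold picard_step.
  rewrite Rplus_minus_l.
  assert (Hc : a <= Rclamp a b t <= b) by (apply Rclamp_in; lra).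
  apply Rle_trans with ((Rclamp a b t - a) * K); [|generalize field_bound_nonneg; nra].
  apply abs_RInt_le_const; [lra| |intros s _; apply HF_bound].
  apply field_along_ex_RInt, picard_limit_continuous.
Qed.

Lemma picard_limit_is_derive i t : a < t < b ->
  is_derive (picard_limit i) t (field_along picard_limit i t).
Proof.
  intros Ht.
  apply (is_derive_ext_loc (fun u => p i + RInt (field_along picard_limit i) a u)).
  - apply (locally_interval _ t a b); cbn; try lra.
    intros u Hau Hub. rewrite <- picard_limit_fixpoint. unfold picard_step.
    rewrite Rclamp_id by lra. reflexivity.
  - replace (field_along picard_limit i t) with (0 + field_along picard_limit i t) by ring.
    apply (is_derive_plus (V := R_NormedModule));
      [exact (is_derive_const (K := R_AbsRing) (V := R_NormedModule) (p i) t)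
      |apply is_derive_RInt_field_along, picard_limit_continuous].
Qed.

End PicardLindelof.

Lemma picard_lindelof F K L a b (p : nat -> R) : a < b ->
  (forall i u v w, Rabs (F i u v w) <= K) -> is_lipschitz F L ->
  3 * L * (b - a) <= / 2 ->
  exists phi : nat -> R -> R,
    (forall i, phi i a = p i) /\
    (forall i t, continuity_pt (phi i) t) /\
    (forall i t, Rabs (phi i t - p i) <= K * (b - a)) /\
    is_solution F a b phi.
Proof.
  intros Hab HK HL Hshort. exists (picard_limit F a b p).
  split; [|split; [|split]].
  - exact (picard_limit_init F K L a b p Hab HK HL Hshort).
  - exact (picard_limit_continuous F K L a b p Hab HK HL Hshort).
  - exact (picard_limit_near_init F K L a b p Hab HK HL Hshort).
  - exact (picard_limit_is_derive F K L a b p Hab HK HL Hshort).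
Qed.

Lemma lipschitz_energy_bound L d0 d1 d2 e0 e1 e2 : 0 <= L ->
  Rabs e0 <= L * (Rabs d0 + Rabs d1 + Rabs d2) ->
  Rabs e1 <= L * (Rabs d0 + Rabs d1 + Rabs d2) ->
  Rabs e2 <= L * (Rabs d0 + Rabs d1 + Rabs d2) ->
  2 * (d0 * e0 + d1 * e1 + d2 * e2) <= 6 * L * (d0 * d0 + d1 * d1 + d2 * d2).
Proof.
  intros HL H0 H1 H2.
  set (S := Rabs d0 + Rabs d1 + Rabs d2) in *.
  assert (Hprod : forall d e, Rabs e <= L * S -> d * e <= Rabs d * (L * S)).
  { intros d e He. eapply Rle_trans; [apply Rle_abs|]. rewrite Rabs_mult.
    apply Rmult_le_compat_l; [apply Rabs_pos|exact He]. }
  assert (Hsq : forall d, d * d = Rabs d * Rabs d)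
    by (intros d; rewrite <- Rabs_mult, Rabs_pos_eq; nra).
  assert (A0 := Hprod d0 e0 H0). assert (A1 := Hprod d1 e1 H1). assert (A2 := Hprod d2 e2 H2).
  rewrite (Hsq d0), (Hsq d1), (Hsq d2).
  assert (HS : S * S <= 3 * (Rabs d0 * Rabs d0 + Rabs d1 * Rabs d1 + Rabs d2 * Rabs d2)).
  { unfold S. generalize (Rle_0_sqr (Rabs d0 - Rabs d1)) (Rle_0_sqr (Rabs d1 - Rabs d2))
      (Rle_0_sqr (Rabs d0 - Rabs d2)). unfold Rsqr. nra. }
  assert (2 * (d0 * e0 + d1 * e1 + d2 * e2) <= 2 * L * (S * S)) by (unfold S in *; nra).
  nra.
Qed.

Lemma gronwall_zero S dS k a t : a < t -> continuity_pt S a -> S a = 0 ->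
  (forall r, a < r <= t -> is_derive S r (dS r) /\ dS r <= k * S r) -> S t <= 0.
Proof.
  intros Hat HSc HSa HS.
  set (E := fun r => S r * exp (- k * r)).
  enough (E t - E a <= 0 * (t - a))
    by (unfold E in *; rewrite HSa in *; generalize (exp_pos (- k * t)); nra).
  apply (mvt_upper E (fun r => (dS r - k * S r) * exp (- k * r)) a t); [exact Hat| |].
  - apply right_continuous_of_continuity_pt, continuity_pt_mult; [exact HSc|].
    apply (is_derive_continuity_pt _ _ (- k * exp (- k * a))). auto_derive; [exact I|ring].
  - intros r Hr. destruct (HS r Hr) as [Hd Hle]. split.
    + replace ((dS r - k * S r) * exp (- k * r))
        with (dS r * exp (- k * r) + S r * (- k * exp (- k * r))) by ring.
      apply (is_derive_mult (K := R_AbsRing) S (fun r => exp (- k * r)));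
        [exact Hd| |intros; apply Rmult_comm].
      auto_derive; [exact I|ring].
    + generalize (exp_pos (- k * r)). nra.
Qed.

(* The squared distance [S] between two solutions satisfies [S' <= 6 L S]. *)
Lemma ode_uniqueness F L a c (phi X : nat -> R -> R) : is_lipschitz F L ->
  (forall i, continuity_pt (phi i) a /\ continuity_pt (X i) a) ->
  is_solution F a c phi -> is_solution F a c X ->
  (forall i, phi i a = X i a) ->
  forall i t, a <= t < c -> phi i t = X i t.
Proof.
  intros HL Hcont Hphi HX H0.
  set (D := fun i s => phi i s - X i s).
  set (dD := fun i s => F i (phi 0%nat s) (phi 1%nat s) (phi 2%nat s)
                        - F i (X 0%nat s) (X 1%nat s) (X 2%nat s)).
  assert (HD : forall i s, a < s < c -> is_derive (D i) s (dD i s)).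
  { intros i s Hs. apply (is_derive_minus (V := R_NormedModule)); [apply Hphi|apply HX]; exact Hs. }
  assert (HDc : forall i, continuity_pt (D i) a)
    by (intros i; apply continuity_pt_minus; apply Hcont).
  assert (Hfirst : forall t, a <= t < c -> D 0%nat t = 0 /\ D 1%nat t = 0 /\ D 2%nat t = 0).
  { intros t Ht. destruct (Req_dec a t) as [<-|Hne]; [unfold D; rewrite !H0; lra|].
    set (S := fun s => D 0%nat s * D 0%nat s + D 1%nat s * D 1%nat s + D 2%nat s * D 2%nat s).
    enough (S t <= 0)
      by (unfold S in *; generalize (Rle_0_sqr (D 0%nat t)) (Rle_0_sqr (D 1%nat t))
            (Rle_0_sqr (D 2%nat t)); unfold Rsqr; intros; repeat split; nra).
    apply (gronwall_zero S
      (fun s => 2 * (D 0%nat s * dD 0%nat s + D 1%nat s * dD 1%nat s + D 2%nat s * dD 2%nat s))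
      (6 * L) a t); [lra| |unfold S, D; rewrite !H0; ring|].
    { unfold S. repeat apply continuity_pt_plus; apply continuity_pt_mult; apply HDc. }
    intros s Hs. split.
    - assert (Hsq : forall i,
          is_derive (fun r => D i r * D i r) s (dD i s * D i s + D i s * dD i s))
        by (intros i; apply (is_derive_mult (K := R_AbsRing)); [apply HD; lra|apply HD; lra|];
            intros; apply Rmult_comm).
      replace (2 * _) with (dD 0%nat s * D 0%nat s + D 0%nat s * dD 0%nat s
        + (dD 1%nat s * D 1%nat s + D 1%nat s * dD 1%nat s)
        + (dD 2%nat s * D 2%nat s + D 2%nat s * dD 2%nat s)) by ring.
      apply (is_derive_plus (V := R_NormedModule)); [apply (is_derive_plus (V := R_NormedModule))|];
        apply Hsq.
    - apply lipschitz_energy_bound; [exact (is_lipschitz_nonneg F L HL)|apply HL..]. }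
  intros i t Ht. enough (D i t = 0) by (unfold D in *; lra).
  destruct (Req_dec a t) as [<-|Hne]; [unfold D; rewrite H0; ring|].
  replace 0 with (D i a) by (unfold D; rewrite H0; ring).
  apply is_derive_0_const; [lra|apply right_continuous_of_continuity_pt, HDc|].
  intros s Hs. destruct (Hfirst s ltac:(lra)) as (E0 & E1 & E2).
  replace 0 with (dD i s) by (unfold D in E0, E1, E2; unfold dD;
    rewrite (Rminus_diag_uniq _ _ E0), (Rminus_diag_uniq _ _ E1), (Rminus_diag_uniq _ _ E2); ring).
  apply HD. lra.
Qed.

Lemma glue_solutions F (X phi : nat -> R -> R) a Tm b : a < Tm < b ->
  is_solution F 0 Tm X -> is_solution F a b phi ->
  (forall i t, a <= t < Tm -> phi i t = X i t) ->
  is_solution F 0 b (fun i t => if Rlt_dec t Tm then X i t else phi i t).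
Proof.
  intros Hab HX Hphi Hagree.
  set (Y := fun i t => if Rlt_dec t Tm then X i t else phi i t).
  assert (HYX : forall i t, t < Tm -> X i t = Y i t).
  { intros i t Ht. unfold Y. destruct (Rlt_dec t Tm); [reflexivity|lra]. }
  assert (HYphi : forall i t, a < t -> phi i t = Y i t).
  { intros i t Ht. unfold Y. destruct (Rlt_dec t Tm); [apply Hagree; lra|reflexivity]. }
  intros i t Ht. destruct (Rlt_or_le t Tm) as [Hlt|Hge].
  - rewrite <- !HYX by exact Hlt.
    apply (is_derive_ext_loc (X i)); [|apply HX; lra].
    apply (locally_interval _ t m_infty Tm); [exact I|exact Hlt|].
    intros s _ Hs. apply HYX, Hs.
  - rewrite <- !HYphi by lra.
    apply (is_derive_ext_loc (phi i)); [|apply Hphi; lra].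
    apply (locally_interval _ t a p_infty); [cbn; lra|exact I|].
    intros s Hs _. apply HYphi, Hs.
Qed.

(** * The vector field and continuation of bounded solutions *)

Definition sys (n i : nat) (u v w : R) : R :=
  match i with 0%nat => fx n u v w | 1%nat => fy n u v w | _ => fz n u v w end.

Definition clamp (R0 u : R) : R := Rclamp (- R0) R0 u.

Definition clamped_sys (n : nat) (R0 : R) (i : nat) (u v w : R) : R :=
  sys n i (clamp R0 u) (clamp R0 v) (clamp R0 w).

Lemma clamp_abs_le R0 u : 0 <= R0 -> Rabs (clamp R0 u) <= R0.
Proof. intros H. apply Rabs_le, Rclamp_in. lra. Qed.

Lemma clamp_id R0 u : Rabs u <= R0 -> clamp R0 u = u.
Proof. intros H. apply Rclamp_id, Rabs_le_between, H. Qed.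

Lemma pow2_le_of_Rabs_le r c : Rabs r <= c -> r ^ 2 <= c ^ 2.
Proof. intros Hr. rewrite <- pow2_abs. apply pow_incr. split; [apply Rabs_pos|exact Hr]. Qed.

Lemma Rabs_sqr_sub_le R0 u u' : Rabs u <= R0 -> Rabs u' <= R0 ->
  Rabs (u ^ 2 - u' ^ 2) <= 2 * R0 * Rabs (u - u').
Proof.
  intros Hu Hu'. replace (u ^ 2 - u' ^ 2) with ((u - u') * (u + u')) by ring.
  rewrite Rabs_mult. generalize (Rabs_triang u u') (Rabs_pos (u - u')). nra.
Qed.

Lemma Rabs_mul_sub_le A B u v u' v' : Rabs u' <= A -> Rabs v <= B ->
  Rabs (u * v - u' * v') <= B * Rabs (u - u') + A * Rabs (v - v').
Proof.
  intros Hu' Hv. replace (u * v - u' * v') with ((u - u') * v + u' * (v - v')) by ring.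
  eapply Rle_trans; [apply Rabs_triang|]. rewrite !Rabs_mult.
  generalize (Rabs_pos (u - u')) (Rabs_pos (v - v')). nra.
Qed.

Section Box.

Variable n : nat.
Hypothesis Hn : (1 <= n)%nat.
Variable R0 : R.
Variables u v w u' v' w' : R.
Hypothesis Hu : Rabs u <= R0.
Hypothesis Hv : Rabs v <= R0.
Hypothesis Hw : Rabs w <= R0.
Hypothesis Hu' : Rabs u' <= R0.
Hypothesis Hw' : Rabs w' <= R0.

Let N := INR n.
Let HN : 1 <= N := le_INR 1 n Hn.

Lemma box_radius_nonneg : 0 <= R0.
Proof. generalize (Rabs_pos u). lra. Qed.

Lemma Rabs_fz_factor_le : Rabs ((N - 1) * u + v) <= N * R0.
Proof.
  eapply Rle_trans; [apply Rabs_triang|].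
  rewrite Rabs_mult, (Rabs_pos_eq (N - 1)) by lra. nra.
Qed.

Lemma sys_bound i : Rabs (sys n i u v w) <= (N + 1) * R0 ^ 2.
Proof.
  assert (Hu2 := pow2_le_of_Rabs_le u R0 Hu). assert (Hw2 := pow2_le_of_Rabs_le w R0 Hw).
  assert (0 <= u ^ 2 /\ 0 <= w ^ 2) by (split; apply pow2_ge_0).
  destruct i as [|[|i]]; cbn [sys]; unfold fx, fy, fz; fold N.
  - rewrite Rabs_pos_eq by nra. nra.
  - rewrite Rabs_pos_eq by nra. nra.
  - assert (Hq := Rabs_fz_factor_le).
    assert (HNpos : 0 < (N + 1) / N) by (apply Rdiv_lt_0_compat; lra).
    rewrite !Rabs_mult, (Rabs_pos_eq ((N + 1) / N)) by lra.
    apply Rle_trans with ((N + 1) / N * (R0 * (N * R0))).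
    + rewrite Rmult_assoc. apply Rmult_le_compat_l; [lra|].
      apply Rmult_le_compat; [apply Rabs_pos|apply Rabs_pos|exact Hw|exact Hq].
    + right. field. lra.
Qed.

Lemma fx_lipschitz : Rabs (fx n u v w - fx n u' v' w')
  <= 2 * (N + 1) * R0 * (Rabs (u - u') + Rabs (v - v') + Rabs (w - w')).
Proof.
  assert (HR0 := box_radius_nonneg).
  generalize (Rabs_pos (u - u')) (Rabs_pos (v - v')) (Rabs_pos (w - w')). intros Hdu Hdv Hdw.
  unfold fx. fold N.
  replace (N * u ^ 2 + w ^ 2 - (N * u' ^ 2 + w' ^ 2))
    with (N * (u ^ 2 - u' ^ 2) + (w ^ 2 - w' ^ 2)) by ring.
  eapply Rle_trans; [apply Rabs_triang|]. rewrite Rabs_mult, (Rabs_pos_eq N) by lra.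
  assert (H1 := Rabs_sqr_sub_le R0 u u' Hu Hu'). assert (H2 := Rabs_sqr_sub_le R0 w w' Hw Hw').
  assert (N * Rabs (u ^ 2 - u' ^ 2) <= N * (2 * R0 * Rabs (u - u')))
    by (apply Rmult_le_compat_l; lra).
  apply Rle_trans with (2 * R0 * (N * Rabs (u - u') + Rabs (w - w'))); [lra|].
  replace (2 * (N + 1) * R0 * (Rabs (u - u') + Rabs (v - v') + Rabs (w - w')))
    with (2 * R0 * ((N + 1) * (Rabs (u - u') + Rabs (v - v') + Rabs (w - w')))) by ring.
  apply Rmult_le_compat_l; [lra|]. nra.
Qed.

Lemma fy_lipschitz : Rabs (fy n u v w - fy n u' v' w')
  <= 2 * (N + 1) * R0 * (Rabs (u - u') + Rabs (v - v') + Rabs (w - w')).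
Proof.
  assert (HR0 := box_radius_nonneg).
  generalize (Rabs_pos (u - u')) (Rabs_pos (v - v')) (Rabs_pos (w - w')). intros Hdu Hdv Hdw.
  unfold fy. fold N.
  replace ((N + 1) * w ^ 2 - (N + 1) * w' ^ 2) with ((N + 1) * (w ^ 2 - w' ^ 2)) by ring.
  rewrite Rabs_mult, (Rabs_pos_eq (N + 1)) by lra.
  assert (H2 := Rabs_sqr_sub_le R0 w w' Hw Hw').
  apply Rle_trans with ((N + 1) * (2 * R0 * Rabs (w - w'))); [apply Rmult_le_compat_l; lra|].
  replace (2 * (N + 1) * R0 * (Rabs (u - u') + Rabs (v - v') + Rabs (w - w')))
    with ((N + 1) * (2 * R0 * (Rabs (u - u') + Rabs (v - v') + Rabs (w - w')))) by ring.
  apply Rmult_le_compat_l; [lra|]. nra.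
Qed.

Lemma fz_lipschitz : Rabs (fz n u v w - fz n u' v' w')
  <= 2 * (N + 1) * R0 * (Rabs (u - u') + Rabs (v - v') + Rabs (w - w')).
Proof.
  assert (HR0 := box_radius_nonneg).
  generalize (Rabs_pos (u - u')) (Rabs_pos (v - v')) (Rabs_pos (w - w')). intros Hdu Hdv Hdw.
  assert (HNpos : 0 < (N + 1) / N) by (apply Rdiv_lt_0_compat; lra).
  unfold fz. fold N.
  set (q := (N - 1) * u + v). set (q' := (N - 1) * u' + v').
  replace ((N + 1) / N * w * q - (N + 1) / N * w' * q')
    with ((N + 1) / N * (w * q - w' * q')) by ring.
  assert (Hdiff : Rabs (w * q - w' * q') <= N * R0 * Rabs (w - w') + R0 * Rabs (q - q'))
    by (apply Rabs_mul_sub_le; [exact Hw'|apply Rabs_fz_factor_le]).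
  assert (Hdq : Rabs (q - q') <= (N - 1) * Rabs (u - u') + Rabs (v - v')).
  { unfold q, q'. replace ((N - 1) * u + v - ((N - 1) * u' + v'))
      with ((N - 1) * (u - u') + (v - v')) by ring.
    eapply Rle_trans; [apply Rabs_triang|].
    rewrite Rabs_mult, (Rabs_pos_eq (N - 1)) by lra. lra. }
  assert (R0 * Rabs (q - q') <= R0 * ((N - 1) * Rabs (u - u') + Rabs (v - v')))
    by (apply Rmult_le_compat_l; lra).
  assert (0 <= R0 * Rabs (u - u')) by (apply Rmult_le_pos; lra).
  assert (0 <= (N - 1) * (R0 * Rabs (v - v'))) by (apply Rmult_le_pos; nra).
  rewrite Rabs_mult, (Rabs_pos_eq ((N + 1) / N)) by lra.
  apply Rle_trans with ((N + 1) / N * (N * R0 * (Rabs (u - u') + Rabs (v - v') + Rabs (w - w')))).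
  - apply Rmult_le_compat_l; lra.
  - replace ((N + 1) / N * (N * R0 * (Rabs (u - u') + Rabs (v - v') + Rabs (w - w'))))
      with ((N + 1) * R0 * (Rabs (u - u') + Rabs (v - v') + Rabs (w - w'))) by (field; lra).
    assert (0 <= (N + 1) * R0 * (Rabs (u - u') + Rabs (v - v') + Rabs (w - w')))
      by (apply Rmult_le_pos; [apply Rmult_le_pos|]; lra).
    lra.
Qed.

Lemma sys_lipschitz i : Rabs (sys n i u v w - sys n i u' v' w')
  <= 2 * (N + 1) * R0 * (Rabs (u - u') + Rabs (v - v') + Rabs (w - w')).
Proof.
  destruct i as [|[|i]]; [apply fx_lipschitz|apply fy_lipschitz|apply fz_lipschitz].
Qed.

End Box.

Lemma clamped_sys_bound n R0 : (1 <= n)%nat -> 0 <= R0 ->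
  forall i u v w, Rabs (clamped_sys n R0 i u v w) <= (INR n + 1) * R0 ^ 2.
Proof. intros Hn HR0 i u v w. apply sys_bound; auto; apply clamp_abs_le, HR0. Qed.

Lemma clamped_sys_lipschitz n R0 : (1 <= n)%nat -> 0 <= R0 ->
  is_lipschitz (clamped_sys n R0) (2 * (INR n + 1) * R0).
Proof.
  intros Hn HR0 i u v w u' v' w'.
  assert (Hclamp : forall r r', Rabs (clamp R0 r - clamp R0 r') <= Rabs (r - r'))
    by (intros; apply Rclamp_lipschitz; lra).
  eapply Rle_trans; [apply sys_lipschitz; auto; apply clamp_abs_le, HR0|].
  apply Rmult_le_compat_l; [generalize (pos_INR n); nra|].
  generalize (Hclamp u u') (Hclamp v v') (Hclamp w w'). lra.
Qed.

Lemma clamped_sys_eq n R0 i u v w : Rabs u <= R0 -> Rabs v <= R0 -> Rabs w <= R0 ->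
  clamped_sys n R0 i u v w = sys n i u v w.
Proof. intros Hu Hv Hw. unfold clamped_sys. rewrite !clamp_id by assumption. reflexivity. Qed.

(* The first term makes the Picard operator of the clamped field a contraction; the
   second keeps its fixed point within distance [1] of the initial value, where the
   clamping is inactive. *)
Definition box_step (n : nat) (R0 : R) : R :=
  Rmin (/ (6 * (2 * (INR n + 1) * R0))) (/ ((INR n + 1) * R0 ^ 2)).

Lemma local_solution_in_box n M a b (p : nat -> R) : (1 <= n)%nat -> 0 <= M ->
  a < b <= a + box_step n (M + 1) -> (forall i, Rabs (p i) <= M) ->
  exists phi : nat -> R -> R,
    (forall i, phi i a = p i) /\ (forall i t, continuity_pt (phi i) t) /\
    (forall i t, Rabs (phi i t) <= M + 1) /\ is_solution (sys n) a b phi.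
Proof.
  intros Hn HM Hab Hp.
  assert (HN : 1 <= INR n) by exact (le_INR 1 n Hn).
  set (K := (INR n + 1) * (M + 1) ^ 2). set (L := 2 * (INR n + 1) * (M + 1)).
  assert (HK : 0 < K) by (apply Rmult_lt_0_compat; [lra|apply pow_lt; lra]).
  assert (HL : 0 < L) by (unfold L; apply Rmult_lt_0_compat; lra).
  change (box_step n (M + 1)) with (Rmin (/ (6 * L)) (/ K)) in Hab.
  assert (HbL : b - a <= / (6 * L)) by (generalize (Rmin_l (/ (6 * L)) (/ K)); lra).
  assert (HbK : b - a <= / K) by (generalize (Rmin_r (/ (6 * L)) (/ K)); lra).
  destruct (picard_lindelof (clamped_sys n (M + 1)) K L a b p)
    as (phi & Hinit & Hcont & Hnear & Hsol);
    [lra|apply clamped_sys_bound; [exact Hn|lra]|apply clamped_sys_lipschitz; [exact Hn|lra]| |].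
  - apply Rle_trans with (3 * L * / (6 * L)); [apply Rmult_le_compat_l; lra|right; field; lra].
  - assert (Hbox : forall i t, Rabs (phi i t) <= M + 1).
    { intros i t. assert (K * (b - a) <= 1)
        by (replace 1 with (K * / K) by (field; lra); apply Rmult_le_compat_l; lra).
      replace (phi i t) with (p i + (phi i t - p i)) by ring.
      eapply Rle_trans; [apply Rabs_triang|]. generalize (Hp i) (Hnear i t). lra. }
    exists phi. split; [exact Hinit|split; [exact Hcont|split; [exact Hbox|]]].
    intros i t Ht. rewrite <- clamped_sys_eq with (R0 := M + 1) by apply Hbox. apply Hsol, Ht.
Qed.

Lemma extend_bounded_solution n Tm M (X : nat -> R -> R) : (1 <= n)%nat -> 0 < Tm ->
  is_solution (sys n) 0 Tm X ->
  (forall i t, Tm / 2 <= t < Tm -> Rabs (X i t) <= M) ->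
  exists b (Y : nat -> R -> R), Tm < b /\ is_solution (sys n) 0 b Y /\
    forall i t, t < Tm -> Y i t = X i t.
Proof.
  intros Hn HTm HX HM.
  assert (HM0 : 0 <= M) by (apply Rle_trans with (2 := HM 0%nat (Tm / 2) ltac:(lra)), Rabs_pos).
  set (dl := Rmin Tm (box_step n (M + 1))).
  assert (Hdl : 0 < dl <= Tm /\ dl <= box_step n (M + 1)).
  { assert (HN := pos_INR n). unfold dl, box_step. split; [split|apply Rmin_r].
    - repeat apply Rmin_pos; [lra|apply Rinv_0_lt_compat; nra|].
      apply Rinv_0_lt_compat, Rmult_lt_0_compat; [lra|apply pow_lt; lra].
    - apply Rmin_l. }
  set (a := Tm - dl / 2). set (b := Tm + dl / 2).
  assert (Hbox : forall i t, a <= t < Tm -> Rabs (X i t) <= M + 1)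
    by (intros i t Ht; apply Rle_trans with M; [apply HM; unfold a in Ht|]; lra).
  destruct (local_solution_in_box n M a b (fun i => X i a))
    as (phi & Hinit & Hcont & Hphibox & Hphi);
    [exact Hn|exact HM0|unfold a, b; lra|intros i; apply HM; unfold a; lra|].
  assert (Hagree : forall i t, a <= t < Tm -> phi i t = X i t).
  { apply (ode_uniqueness (clamped_sys n (M + 1)) (2 * (INR n + 1) * (M + 1)));
      [apply clamped_sys_lipschitz; [exact Hn|lra]| | | |exact Hinit].
    - intros i. split; [apply Hcont|].
      apply (is_derive_continuity_pt _ _ _ (HX i a ltac:(unfold a; lra))).
    - intros i t Ht. rewrite clamped_sys_eq by apply Hphibox. apply Hphi. unfold b; lra.
    - intros i t Ht. rewrite clamped_sys_eq by (apply Hbox; lra). apply HX. unfold a in Ht; lra. }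
  exists b, (fun i t => if Rlt_dec t Tm then X i t else phi i t). split; [unfold b; lra|split].
  - apply (glue_solutions _ X phi a Tm b); [unfold a, b; lra|exact HX|exact Hphi|exact Hagree].
  - intros i t Ht. destruct (Rlt_dec t Tm); [reflexivity|lra].
Qed.

Definition triple (x y z : R -> R) (i : nat) : R -> R :=
  match i with 0%nat => x | 1%nat => y | _ => z end.

Lemma maximal_sol_not_extendable n Tm x y z b (Y : nat -> R -> R) :
  is_maximal_sol n (Finite Tm) x y z -> Tm < b -> is_solution (sys n) 0 b Y ->
  ~ (forall i t, t < Tm -> Y i t = triple x y z i t).
Proof.
  intros (HTm & Hsol & Hmax) Hb HY Hagree. cbn in HTm.
  assert (Hright : forall i, filterlim (Y i) (at_right 0) (locally (Y i 0))).
  { intros i. rewrite Hagree by lra.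
    apply (filterlim_ext_loc (triple x y z i)).
    - exists (mkposreal Tm HTm). intros t Ht Ht0. symmetry. apply Hagree.
      cbn in Ht; unfold AbsRing_ball, abs, minus, plus, opp in Ht; cbn in Ht.
      rewrite Ropp_0, Rplus_0_r, Rabs_pos_eq in Ht by lra. exact Ht.
    - destruct i as [|[|i]]; apply Hsol. }
  assert (Hsol' : is_sol n (Finite b) (Y 0%nat) (Y 1%nat) (Y 2%nat)).
  { split; [|split; [|split]]; [|apply Hright..].
    intros t Ht Htb. exact (conj (HY 0%nat t (conj Ht Htb))
      (conj (HY 1%nat t (conj Ht Htb)) (HY 2%nat t (conj Ht Htb)))). }
  assert (Hle := Hmax (Finite b) _ _ _ Hsol' ltac:(intros t Ht Htb;
    exact (conj (Hagree 0%nat t Htb) (conj (Hagree 1%nat t Htb) (Hagree 2%nat t Htb))))).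
  cbn in Hle. lra.
Qed.

(** * The solution starting at [(1, y0, z0)] *)

Lemma inD_z0_lt_1 n y0 z0 : (1 <= n)%nat -> inD n y0 z0 -> z0 < 1.
Proof.
  intros Hn (Hy0 & Hz0 & Hyz & Hy1).
  assert (HN : 1 <= INR n) by exact (le_INR 1 n Hn).
  assert (Hden : 0 < z0 ^ 2 + INR n) by (generalize (pow2_ge_0 z0); lra).
  apply Rmult_le_compat_r with (r := z0 ^ 2 + INR n) in Hyz; [|lra].
  unfold Rdiv in Hyz. rewrite Rmult_assoc, Rinv_l, Rmult_1_r in Hyz by lra.
  assert (y0 * (z0 ^ 2 + INR n) < 1 * (z0 ^ 2 + INR n)) by (apply Rmult_lt_compat_r; lra).
  assert (Hz2 : z0 ^ 2 < 1) by nra.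
  nra.
Qed.

Lemma reciprocal_bounds N g d : 2 <= N -> 0 < d -> N * d <= g < (N + 2) * d ->
  1 / ((N + 3) * d) < / g < (N + 3) / d.
Proof.
  intros HN Hd [Hlo Hhi]. assert (Hg : 0 < g) by nra. split.
  - unfold Rdiv. rewrite Rmult_1_l. apply Rinv_lt_contravar; nra.
  - apply Rle_lt_trans with (/ (N * d)); [apply Rinv_le_contravar; nra|].
    rewrite Rinv_mult. unfold Rdiv. apply Rmult_lt_compat_r; [apply Rinv_0_lt_compat; lra|].
    assert (/ N <= / 2) by (apply Rinv_le_contravar; lra). lra.
Qed.

Section Solution.

Variable n : nat.
Variables y0 z0 : R.
Variable T : Rbar.
Variables x y z : R -> R.
Hypothesis Hn : (2 <= n)%nat.
Hypothesis HD : inD n y0 z0.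
Hypothesis Hx0 : x 0 = 1.
Hypothesis Hy0 : y 0 = y0.
Hypothesis Hz0 : z 0 = z0.
Hypothesis HT0 : Rbar_lt 0 T.
Hypothesis Hsol : is_sol n T x y z.

Let N := INR n.
Let HN : 2 <= N := le_INR 2 n Hn.

Lemma lt_T_of_le s t : s <= t -> Rbar_lt t T -> Rbar_lt s T.
Proof. intros Hst HtT. apply Rbar_le_lt_trans with t; [exact Hst|exact HtT]. Qed.

Lemma sol_derive t : 0 < t -> Rbar_lt t T ->
  is_derive x t (fx n (x t) (y t) (z t)) /\ is_derive y t (fy n (x t) (y t) (z t)) /\
  is_derive z t (fz n (x t) (y t) (z t)).
Proof. apply Hsol. Qed.

Lemma x_right_continuous s : 0 <= s -> Rbar_lt s T -> right_continuous x s.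
Proof.
  intros Hs HsT. destruct (Req_dec s 0) as [->|Hne]; [apply Hsol|].
  apply right_continuous_of_continuity_pt.
  exact (is_derive_continuity_pt _ _ _ (proj1 (sol_derive s ltac:(lra) HsT))).
Qed.

Lemma x_ge_1 t : 0 <= t -> Rbar_lt t T -> 1 <= x t.
Proof.
  intros Ht HtT. destruct (Req_dec t 0) as [->|Hne]; [lra|].
  rewrite <- Hx0.
  enough (0 * (t - 0) <= x t - x 0) by lra.
  apply (mvt_lower x (fun r => fx n (x r) (y r) (z r))); [lra|apply Hsol|].
  intros r Hr. split; [apply sol_derive; [lra|apply lt_T_of_le with t; [lra|exact HtT]]|].
  unfold fx. apply Rplus_le_le_0_compat; [apply Rmult_le_pos; [apply pos_INR|]|]; apply pow2_ge_0.
Qed.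

Lemma z0_in_unit : 0 < z0 < 1.
Proof. split; [apply HD|apply (inD_z0_lt_1 n y0 z0); [lia|exact HD]]. Qed.

Lemma x_sub_y_pos t : 0 <= t -> Rbar_lt t T ->
  (forall r, 0 < r <= t -> Rabs (z r) <= x r) -> 0 < x t - y t.
Proof.
  intros Ht HtT Hcone. destruct HD as (_ & _ & _ & Hy01).
  destruct (Req_dec t 0) as [->|Hne]; [rewrite Hx0, Hy0; lra|].
  enough (0 * (t - 0) <= (x t - y t) - (x 0 - y 0)) by (rewrite Hx0, Hy0 in *; lra).
  apply (mvt_lower (fun r => x r - y r)
    (fun r => fx n (x r) (y r) (z r) - fy n (x r) (y r) (z r)));
    [lra|apply right_continuous_minus; apply Hsol|].
  intros r Hr. destruct (sol_derive r ltac:(lra) (lt_T_of_le r t ltac:(lra) HtT)) as (Dx & Dy & _).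
  split; [apply (is_derive_minus (V := R_NormedModule)); assumption|].
  assert (Hz2 := pow2_le_of_Rabs_le (z r) (x r) (Hcone r Hr)).
  unfold fx, fy. fold N. nra.
Qed.

Lemma abs_z_lt_x t : 0 <= t -> Rbar_lt t T -> Rabs (z t) < x t.
Proof.
  intros Ht HtT.
  set (h := fun r => x r - Rabs (z r)).
  enough (0 < h t) by (unfold h in *; lra).
  assert (Hh0 : 0 < h 0) by (unfold h; rewrite Hx0, Hz0, Rabs_pos_eq; generalize z0_in_unit; lra).
  apply Rnot_le_lt. intros Hht.
  assert (Htpos : 0 < t) by (destruct (Req_dec t 0) as [->|]; lra).
  destruct (first_zero h 0 t Htpos Hh0 Hht) as (u & Hu & Hhu & Hbefore).
  { apply right_continuous_minus; [apply Hsol|].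
    apply (right_continuous_comp Rabs z 0); [apply Hsol|apply Rcontinuity_abs]. }
  { intros r Hr.
    destruct (sol_derive r ltac:(lra) (lt_T_of_le r t ltac:(lra) HtT)) as (Dx & _ & Dz).
    apply continuity_pt_minus; [exact (is_derive_continuity_pt _ _ _ Dx)|].
    apply (continuity_pt_comp z Rabs);
      [exact (is_derive_continuity_pt _ _ _ Dz)|apply Rcontinuity_abs]. }
  unfold h in Hhu, Hbefore.
  assert (HuT : Rbar_lt u T) by (apply lt_T_of_le with t; [lra|exact HtT]).
  destruct (sol_derive u ltac:(lra) HuT) as (Dx & _ & Dz).
  assert (Hxu : 1 <= x u) by (apply x_ge_1; [lra|exact HuT]).
  assert (Hxy : 0 < x u - y u).
  { apply x_sub_y_pos; [lra|exact HuT|]. intros r Hr.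
    destruct (Req_dec r u) as [->|Hne]; [lra|]. generalize (Hbefore r ltac:(lra)). lra. }
  assert (Hslope : 0 < (N + 1) / N * x u * (x u - y u)).
  { apply Rmult_lt_0_compat; [apply Rmult_lt_0_compat; [apply Rdiv_lt_0_compat|]|]; lra. }
  destruct (Rle_or_lt 0 (z u)) as [Hzpos|Hzneg].
  - assert (Hzx : z u = x u) by (rewrite Rabs_pos_eq in Hhu; lra).
    apply (Rlt_not_le _ _ Hslope).
    replace ((N + 1) / N * x u * (x u - y u))
      with (fx n (x u) (y u) (z u) - fz n (x u) (y u) (z u))
      by (unfold fx, fz; fold N; rewrite Hzx; field; lra).
    apply (is_derive_nonpos_at_first_zero (fun r => x r - z r) 0 u); [lra| |lra|].
    + intros r Hr. generalize (Hbefore r ltac:(lra)) (Rle_abs (z r)). lra.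
    + apply (is_derive_minus (V := R_NormedModule)); assumption.
  - assert (Hzx : z u = - x u) by (rewrite Rabs_left in Hhu; lra).
    apply (Rlt_not_le _ _ Hslope).
    replace ((N + 1) / N * x u * (x u - y u))
      with (fx n (x u) (y u) (z u) + fz n (x u) (y u) (z u))
      by (unfold fx, fz; fold N; rewrite Hzx; field; lra).
    apply (is_derive_nonpos_at_first_zero (fun r => x r + z r) 0 u); [lra| |lra|].
    + intros r Hr. generalize (Hbefore r ltac:(lra)) (Rabs_maj2 (z r)). lra.
    + apply (is_derive_plus (V := R_NormedModule)); assumption.
Qed.

Lemma y_gt_0_lt_x t : 0 <= t -> Rbar_lt t T -> 0 < y t < x t.
Proof.
  intros Ht HtT. split.
  - destruct HD as (Hy0pos & _ & _ & _).
    destruct (Req_dec t 0) as [->|Hne]; [lra|].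
    enough (0 * (t - 0) <= y t - y 0) by (rewrite Hy0 in *; lra).
    apply (mvt_lower y (fun r => fy n (x r) (y r) (z r))); [lra|apply Hsol|].
    intros r Hr. split; [apply sol_derive; [lra|apply lt_T_of_le with t; [lra|exact HtT]]|].
    unfold fy. apply Rmult_le_pos; [generalize (pos_INR n); lra|apply pow2_ge_0].
  - enough (0 < x t - y t) by lra.
    apply x_sub_y_pos; [exact Ht|exact HtT|].
    intros r Hr. apply Rlt_le, abs_z_lt_x; [lra|apply lt_T_of_le with t; [lra|exact HtT]].
Qed.

Definition inv_x (t : R) : R := / x t.

Lemma inv_x_slope s t : 0 <= s < t -> Rbar_lt t T ->
  - (N + 1) * (t - s) <= inv_x t - inv_x s <= - N * (t - s).
Proof.
  intros Hst HtT.
  set (dg := fun r => - fx n (x r) (y r) (z r) / x r ^ 2).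
  assert (Hder : forall r, s < r <= t -> is_derive inv_x r (dg r) /\ - (N + 1) <= dg r <= - N).
  { intros r Hr. assert (HrT : Rbar_lt r T) by (apply lt_T_of_le with t; [lra|exact HtT]).
    assert (Hx := x_ge_1 r ltac:(lra) HrT). assert (Hz := abs_z_lt_x r ltac:(lra) HrT).
    split.
    - apply is_derive_inv; [apply sol_derive; [lra|exact HrT]|lra].
    - assert (Hz2 := pow2_le_of_Rabs_le (z r) (x r) (Rlt_le _ _ Hz)).
      unfold dg, fx. fold N.
      replace (- (N * x r ^ 2 + z r ^ 2) / x r ^ 2) with (- N - z r ^ 2 / x r ^ 2) by (field; lra).
      assert (0 <= z r ^ 2 / x r ^ 2 <= 1).
      { split; [apply Rdiv_le_0_compat; [apply pow2_ge_0|nra]|].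
        apply Rmult_le_reg_r with (x r ^ 2); [nra|].
        unfold Rdiv. rewrite Rmult_assoc, Rinv_l by nra. lra. }
      lra. }
  assert (Hright : right_continuous inv_x s).
  { assert (HsT : Rbar_lt s T) by (apply lt_T_of_le with t; [lra|exact HtT]).
    assert (Hxs := x_ge_1 s ltac:(lra) HsT).
    apply (right_continuous_comp Rinv x s); [apply x_right_continuous; [lra|exact HsT]|].
    exact (continuity_pt_inv id (x s) (continuity_pt_id _) ltac:(unfold id; lra)). }
  split.
  - apply (mvt_lower inv_x dg s t); [lra|exact Hright|].
    intros r Hr. split; apply Hder; lra.
  - apply (mvt_upper inv_x dg s t); [lra|exact Hright|].
    intros r Hr. split; apply Hder; lra.
Qed.

Lemma inv_x_pos t : 0 <= t -> Rbar_lt t T -> 0 < inv_x t.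
Proof. intros Ht HtT. apply Rinv_0_lt_compat. generalize (x_ge_1 t Ht HtT). lra. Qed.

Lemma lifespan_finite : exists Tm, T = Finite Tm /\
  forall t, 0 <= t < Tm -> N * (Tm - t) <= inv_x t.
Proof.
  assert (HTcases : (exists Tm, T = Finite Tm) \/ T = p_infty \/ T = m_infty)
    by (destruct T; eauto).
  destruct HTcases as [[Tm HT]|[HT|HT]].
  - exists Tm. split; [exact HT|]. intros t Ht. apply Rnot_lt_le. intros Hlt.
    assert (Hgt := inv_x_pos t ltac:(lra) ltac:(rewrite HT; cbn; lra)).
    set (s := t + inv_x t / N).
    assert (Hs : t < s < Tm).
    { assert (Hq : 0 < inv_x t / N) by (apply Rdiv_lt_0_compat; lra).
      assert (Hq' : inv_x t / N < Tm - t)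
        by (apply Rmult_lt_reg_r with N; [lra|]; unfold Rdiv; rewrite Rmult_assoc, Rinv_l; lra).
      unfold s. lra. }
    assert (Hslope := inv_x_slope t s ltac:(lra) ltac:(rewrite HT; cbn; lra)).
    assert (Hgs := inv_x_pos s ltac:(lra) ltac:(rewrite HT; cbn; lra)).
    assert (N * (s - t) = inv_x t) by (unfold s; field; lra).
    lra.
  - exfalso.
    assert (Hslope := inv_x_slope 0 1 ltac:(lra) ltac:(rewrite HT; exact I)).
    assert (Hg1 := inv_x_pos 1 ltac:(lra) ltac:(rewrite HT; exact I)).
    assert (Hg0 : inv_x 0 = 1) by (unfold inv_x; rewrite Hx0; apply Rinv_1).
    lra.
  - rewrite HT in HT0. contradiction.
Qed.

Lemma sol_is_solution Tm : T = Finite Tm -> is_solution (sys n) 0 Tm (triple x y z).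
Proof.
  intros HT i r Hr.
  destruct (sol_derive r ltac:(lra) ltac:(rewrite HT; cbn; lra)) as (Dx & Dy & Dz).
  destruct i as [|[|i]]; assumption.
Qed.

Lemma sol_bounded eps : 0 < eps ->
  (forall t, 0 <= t -> Rbar_lt t T -> eps <= inv_x t) ->
  forall i t, 0 <= t -> Rbar_lt t T -> Rabs (triple x y z i t) <= / eps.
Proof.
  intros Heps Hge i t Ht HtT.
  assert (Hx1 := x_ge_1 t Ht HtT).
  assert (Hx : x t <= / eps).
  { replace (x t) with (/ inv_x t) by (unfold inv_x; apply Rinv_inv).
    apply Rinv_le_contravar; [exact Heps|apply Hge; assumption]. }
  assert (Hy := y_gt_0_lt_x t Ht HtT). assert (Hz := abs_z_lt_x t Ht HtT).
  destruct i as [|[|i]]; cbn; [rewrite Rabs_pos_eq|rewrite Rabs_pos_eq|]; lra.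
Qed.

Lemma inv_x_vanishes Tm : T = Finite Tm -> is_maximal_sol n T x y z ->
  forall eps, 0 < eps -> exists s, 0 <= s < Tm /\ inv_x s < eps.
Proof.
  intros HT Hmax eps Heps. apply NNPP. intros Hno.
  assert (HTm : 0 < Tm) by (rewrite HT in HT0; exact HT0).
  assert (Hge : forall t, 0 <= t -> Rbar_lt t T -> eps <= inv_x t).
  { intros t Ht HtT. rewrite HT in HtT. apply Rnot_lt_le. intros Hlt.
    apply Hno. exists t. split; [split; [exact Ht|exact HtT]|exact Hlt]. }
  destruct (extend_bounded_solution n Tm (/ eps) (triple x y z))
    as (b & Y & Hb & HY & Hagree); [lia|exact HTm|exact (sol_is_solution Tm HT)| |].
  { intros i t Ht. apply sol_bounded; [exact Heps|exact Hge|lra|rewrite HT; cbn; lra]. }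
  rewrite HT in Hmax. exact (maximal_sol_not_extendable n Tm x y z b Y Hmax Hb HY Hagree).
Qed.

Lemma inv_x_upper Tm : T = Finite Tm -> is_maximal_sol n T x y z ->
  forall t, 0 <= t < Tm -> inv_x t < (N + 2) * (Tm - t).
Proof.
  intros HT Hmax t Ht.
  destruct (inv_x_vanishes Tm HT Hmax (Tm - t) ltac:(lra)) as (s & Hs & Hgs).
  assert (HtT : forall r, r < Tm -> Rbar_lt r T) by (intros r Hr; rewrite HT; exact Hr).
  destruct (Rtotal_order s t) as [Hst|[->|Hts]].
  - destruct (inv_x_slope s t ltac:(lra) (HtT t ltac:(lra))). nra.
  - nra.
  - destruct (inv_x_slope t s ltac:(lra) (HtT s ltac:(lra))). nra.
Qed.

End Solution.

Theorem lemma3p7 (n : nat) (y0 z0 : R) (T : Rbar) (x y z : R -> R) :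
  (2 <= n)%nat ->
  inD n y0 z0 ->
  x 0 = 1 -> y 0 = y0 -> z 0 = z0 ->
  is_maximal_sol n T x y z ->
  (forall t, 0 <= t -> Rbar_lt t T -> y t < x t /\ z t < x t) /\
  exists Tmax : R, T = Finite Tmax /\
    exists C : R, 0 < C /\
      forall t, 0 <= t < Tmax ->
        1 / (C * (Tmax - t)) < x t /\ x t < C / (Tmax - t).
Proof.
  intros Hn HD Hx0 Hy0 Hz0 Hmax.
  pose proof Hmax as (HT0 & Hsol & _).
  split.
  { intros t Ht HtT. split.
    - apply (y_gt_0_lt_x n y0 z0 T x y z); assumption.
    - apply Rle_lt_trans with (1 := Rle_abs (z t)).
      apply (abs_z_lt_x n y0 z0 T x y z); assumption. }
  destruct (lifespan_finite n y0 z0 T x y z) as (Tm & HT & Hlower); try assumption.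
  exists Tm. split; [exact HT|].
  exists (INR n + 3). split; [generalize (pos_INR n); lra|].
  intros t Ht.
  replace (x t) with (/ inv_x x t) by (unfold inv_x; apply Rinv_inv).
  apply reciprocal_bounds; [exact (le_INR 2 n Hn)|lra|split].
  - apply Hlower, Ht.
  - apply (inv_x_upper n y0 z0 T x y z); assumption.
Qed.
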